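(* Let $\nu_0=0$, $s>0$, $\gamma\ge0$, $u>0$. Then for every $r\ge0$ and $y_0\in[0,1]$, $$g_r(y_0)=y_0\exp\Big(-\int_0^r\big(1-y(\xi;y_0)\big)\big(s+\gamma(1-y(\xi;y_0))\big)\,d\xi\Big),$$ where $y(\cdot;y_0)$ solves $\dot y=-y(1-y)[s+\gamma(1-y)]+u(1-y)$, $y(0)=y_0$.
   Context: Embedded ASG: let $\Xi^\star$ be the set of finite rooted trees in which every vertex has outdegree at most 3, the children of an outdegree-2 vertex are labelled left and right, the children of an outdegree-3 vertex are labelled left, middle and right, and every outdegree-1 vertex carries a mark $\times$ or $\circ$. The embedded ASG process $(a_r)_{r\ge0}$ starts from a single unmarked root. Independently at each leaf $\ell$: at rate $s$ two children (left, right) are attached; at rate $\gamma$ three children (left, middle, right) are attached; at rate $u\nu_1$ one child is attached and $\ell$ is marked $\times$; at rate $u\nu_0$ one child is attached and $\ell$ is marked $\circ$. Typing: given a leaf-type configuration $c\in\{0,1\}^{\text{leaves}}$, vertex types $\bar c$ are propagated towards the root as follows. A $\times$-marked vertex has type 1 and a $\circ$-marked vertex has type 0. An outdegree-2 vertex has type 1 iff both children have type 1. An outdegree-3 vertex has type 0 iff its left child has type 0 or both its middle and right children have type 0. Ancestral leaf $\lambda_v$ of a vertex $v$: - a leaf is its own ancestral leaf; - for outdegree 2, $\lambda_v$ is $\lambda$ of the right child if the right child has type 0, and $\lambda$ of the left child otherwise; - for outdegree 3, $\lambda_v$ is $\lambda$ of the right child if the middle and right children both have type 0, and $\lambda$ of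 the left child otherwise; - for outdegree 1, $\lambda_v$ is $\lambda$ of the child. $g_r(y_0)$ is the probability that $c_{\lambda_{\rm root}(a_r)}=1$, where the leaves of $a_r$ are typed independently, each with type 1 with probability $y_0$, independently of $a_r$. *)

From Stdlib Require Import Reals List Bool Arith.
From Coquelicot Require Import Coquelicot.
Open Scope R_scope.

(* Finite rooted trees of the embedded ASG, outdegree <= 3, with labelled
   children.  [Mk true c] is an outdegree-1 vertex marked x (cross),
   [Mk false c] is an outdegree-1 vertex marked o (circle). *)
Inductive asg_tree : Type :=
| Lf : asg_tree
| Mk : bool -> asg_tree -> asg_tree
| Bi : asg_tree -> asg_tree -> asg_tree
| Tr : asg_tree -> asg_tree -> asg_tree -> asg_tree.

Fixpoint nleaves (t : asg_tree) : nat :=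
  match t with
  | Lf => 1%nat
  | Mk _ c => nleaves c
  | Bi l r => (nleaves l + nleaves r)%nat
  | Tr l m r => (nleaves l + nleaves m + nleaves r)%nat
  end.

Inductive asg_event : Type := EBin | ETer | EMk1 | EMk0.

Definition all_events : list asg_event := EBin :: ETer :: EMk1 :: EMk0 :: nil.

Definition new_node (e : asg_event) : asg_tree :=
  match e with
  | EBin => Bi Lf Lf
  | ETer => Tr Lf Lf Lf
  | EMk1 => Mk true Lf
  | EMk0 => Mk false Lf
  end.

Definition ev_rate (s gam u nu0 nu1 : R) (e : asg_event) : R :=
  match e with
  | EBin => s
  | ETer => gam
  | EMk1 => u * nu1
  | EMk0 => u * nu0
  end.

(* apply event e at the i-th leaf (leaves numbered 0,1,... from left to right) *)
Fixpoint grow (t : asg_tree) (i : nat) (e : asg_event) : asg_tree :=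
  match t with
  | Lf => match i with O => new_node e | S _ => Lf end
  | Mk b c => Mk b (grow c i e)
  | Bi l r =>
      if Nat.ltb i (nleaves l) then Bi (grow l i e) r
      else Bi l (grow r (i - nleaves l) e)
  | Tr l m r =>
      if Nat.ltb i (nleaves l) then Tr (grow l i e) m r
      else if Nat.ltb (i - nleaves l) (nleaves m)
           then Tr l (grow m (i - nleaves l) e) r
           else Tr l m (grow r (i - nleaves l - nleaves m) e)
  end.

(* Leaf-type configurations: c j is the type of the j-th leaf (true = 1). *)
Definition shiftc (c : nat -> bool) (k : nat) : nat -> bool := fun j => c (j + k)%nat.

Fixpoint vtype (t : asg_tree) (c : nat -> bool) : bool :=
  match t with
  | Lf => c O
  | Mk b _ => b
  | Bi l r => vtype l c && vtype r (shiftc c (nleaves l))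
  | Tr l m r =>
      negb (negb (vtype l c)
            || (negb (vtype m (shiftc c (nleaves l)))
                && negb (vtype r (shiftc c (nleaves l + nleaves m)))))
  end.

Fixpoint anc_leaf (t : asg_tree) (c : nat -> bool) : nat :=
  match t with
  | Lf => O
  | Mk _ ch => anc_leaf ch c
  | Bi l r =>
      if negb (vtype r (shiftc c (nleaves l)))
      then (nleaves l + anc_leaf r (shiftc c (nleaves l)))%nat
      else anc_leaf l c
  | Tr l m r =>
      if negb (vtype m (shiftc c (nleaves l)))
         && negb (vtype r (shiftc c (nleaves l + nleaves m)))
      then (nleaves l + nleaves m + anc_leaf r (shiftc c (nleaves l + nleaves m)))%nat
      else anc_leaf l c
  end.

Fixpoint all_cfgs (n : nat) : list (list bool) :=
  match n with
  | O => nil :: nil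
  | S n' => map (cons true) (all_cfgs n') ++ map (cons false) (all_cfgs n')
  end.

Definition sumR {A : Type} (f : A -> R) (l : list A) : R :=
  fold_right (fun (a : A) (acc : R) => f a + acc) 0 l.

Definition cfg_weight (y0 : R) (l : list bool) : R :=
  fold_right (fun (b : bool) (acc : R) => (if b then y0 else 1 - y0) * acc) 1 l.

(* probability that the ancestral leaf of the root of t has type 1, when the
   leaves of t are typed i.i.d., type 1 with probability y0 *)
Definition anc_type1_prob (t : asg_tree) (y0 : R) : R :=
  sumR (fun l => cfg_weight y0 l *
                 (if nth (anc_leaf t (fun j => nth j l false)) l false then 1 else 0))
       (all_cfgs (nleaves t)).

Definition lam (s gam u nu0 nu1 : R) : R :=
  s + gam + u * nu1 + u * nu0.

(* The embedded ASG as a continuous-time Markov jump process, built from its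
   jump chain and exponential holding times: the state t is left at rate
   lam * nleaves t, and the jump "event e at leaf i" has rate ev_rate e.
   [jumpsum ... k t r] is the probability, starting from t, that the process
   makes exactly k jumps in [0, r] and that the ancestral leaf of the root of
   the tree at time r has type 1 (with i.i.d. leaf typing of parameter y0). *)
Fixpoint jumpsum (s gam u nu0 nu1 y0 : R) (k : nat) (t : asg_tree) (r : R) : R :=
  match k with
  | O => exp (- (lam s gam u nu0 nu1 * INR (nleaves t)) * r) * anc_type1_prob t y0
  | S k' =>
      sumR (fun i =>
        sumR (fun e =>
          ev_rate s gam u nu0 nu1 e *
          RInt (fun tau => exp (- (lam s gam u nu0 nu1 * INR (nleaves t)) * tau) *
                           jumpsum s gam u nu0 nu1 y0 k' (grow t i e) (r - tau)) 0 r)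
          all_events)
        (seq 0 (nleaves t))
  end.

(* g_r(y0) = P(c_{lambda_root(a_r)} = 1), a_0 = single unmarked root *)
Definition g_asg (s gam u nu0 nu1 : R) (r y0 : R) : R :=
  Series (fun k => jumpsum s gam u nu0 nu1 y0 k Lf r).

(* Write V for the type of the root of a tree and A for the type of its ancestral leaf. When
   the leaves carry independent copies of a joint law of (V, A), the law of (V, A) at the root
   is computed subtree by subtree and is affine in the law of each subtree ([tree_law]); for
   i.i.d. Bernoulli(y0) leaves it yields the probability appearing in [g_asg].
   Give instead every leaf the law with P(A = 1) = g(x) := y0 exp(-int_0^x (1-y)(s+gam(1-y)))
   and P(V = 1) = y(x), and let Phi_t(x) be the resulting P(A = 1) for the tree t. Then Phi
   solves the backward equation of the embedded ASG, d/dx Phi_t = sum over the jumps t -> t'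
   of rate * (Phi_t' - Phi_t): for a single leaf this is the pair of ODEs for y and g, and it
   propagates to all trees because the generator splits over subtrees while the root law is
   affine in each of them. Duhamel's formula turns this into the fixed-point equation whose
   iteration is the series [g_asg] (at x = 0 the leaf law is Bernoulli(y0)). A tree with n
   leaves jumps at rate (s+gam+u) n and gains at most two leaves per jump, which bounds the
   remainder after N terms by n/(n+2N) e^(2(s+gam+u)r); so the series converges to
   Phi_leaf(r) = g(r). *)

From Stdlib Require Import Reals Lra Lia List Bool.
From Coquelicot Require Import Coquelicot.
Open Scope R_scope.

Section FiniteSums.
Context {A : Type}.
Implicit Types (f g : A -> R) (l : list A).

Lemma sumR_app f l1 l2 : sumR f (l1 ++ l2) = sumR f l1 + sumR f l2.
Proof. unfold sumR; induction l1 as [|a l1 IH]; cbn; rewrite ?IH; ring. Qed.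

Lemma sumR_map {B} (f : B -> R) (h : A -> B) l : sumR f (map h l) = sumR (fun a => f (h a)) l.
Proof. unfold sumR; induction l as [|a l IH]; cbn; rewrite ?IH; reflexivity. Qed.

Lemma sumR_ext_in f g l : (forall a, In a l -> f a = g a) -> sumR f l = sumR g l.
Proof.
  unfold sumR; induction l as [|a l IH]; intros H; cbn; [reflexivity|].
  rewrite H, IH; auto. intros; apply H; now right. now left.
Qed.

Lemma sumR_ext f g l : (forall a, f a = g a) -> sumR f l = sumR g l.
Proof. intros; apply sumR_ext_in; auto. Qed.

Lemma sumR_plus f g l : sumR (fun a => f a + g a) l = sumR f l + sumR g l.
Proof. unfold sumR; induction l as [|a l IH]; cbn; rewrite ?IH; ring. Qed.

Lemma sumR_scal c f l : sumR (fun a => c * f a) l = c * sumR f l.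
Proof. unfold sumR; induction l as [|a l IH]; cbn; rewrite ?IH; ring. Qed.

Lemma sumR_const c l : sumR (fun _ => c) l = c * INR (length l).
Proof.
  unfold sumR; induction l as [|a l IH]; cbn [length]; rewrite ?S_INR; cbn; rewrite ?IH; ring.
Qed.

Lemma sumR_le f g l : (forall a, In a l -> f a <= g a) -> sumR f l <= sumR g l.
Proof.
  unfold sumR; induction l as [|a l IH]; intros H; cbn; [lra|].
  apply Rplus_le_compat. apply H; now left. apply IH; intros; apply H; now right.
Qed.

Lemma Rabs_sumR f l : Rabs (sumR f l) <= sumR (fun a => Rabs (f a)) l.
Proof.
  unfold sumR; induction l as [|a l IH]; cbn; [rewrite Rabs_R0; lra|].
  eapply Rle_trans; [apply Rabs_triang | lra].
Qed.

End FiniteSums.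

Lemma sumR_seq_shift (f : nat -> R) k n :
  sumR f (seq k n) = sumR (fun i => f (k + i)%nat) (seq 0 n).
Proof.
  induction n as [|n IH]; [reflexivity|].
  rewrite !seq_S, !sumR_app, IH. reflexivity.
Qed.

Lemma sumR_seq_add (f : nat -> R) n1 n2 :
  sumR f (seq 0 (n1 + n2)) = sumR f (seq 0 n1) + sumR (fun i => f (n1 + i)%nat) (seq 0 n2).
Proof. rewrite seq_app, sumR_app, (sumR_seq_shift f (0 + n1)). reflexivity. Qed.

(** * Trees and their typings *)

Lemma nleaves_pos t : (1 <= nleaves t)%nat.
Proof. induction t; cbn; lia. Qed.

Lemma nleaves_grow t i e : (nleaves (grow t i e) <= nleaves t + 2)%nat.
Proof.
  revert i; induction t as [|b t IH|l IHl r IHr|l IHl m IHm r IHr]; intros i; cbn [grow nleaves].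
  - destruct i; [destruct e|]; cbn; lia.
  - apply IH.
  - destruct (Nat.ltb i (nleaves l)); cbn [nleaves];
      [specialize (IHl i) | specialize (IHr (i - nleaves l)%nat)]; lia.
  - destruct (Nat.ltb i (nleaves l)); [|destruct (Nat.ltb (i - nleaves l) (nleaves m))];
      cbn [nleaves]; [specialize (IHl i) | specialize (IHm (i - nleaves l)%nat)
      | specialize (IHr (i - nleaves l - nleaves m)%nat)]; lia.
Qed.

Lemma grow_Bi_l l r i e : (i < nleaves l)%nat -> grow (Bi l r) i e = Bi (grow l i e) r.
Proof. intros H; cbn [grow]. rewrite (proj2 (Nat.ltb_lt _ _) H). reflexivity. Qed.

Lemma grow_Bi_r l r i e : grow (Bi l r) (nleaves l + i) e = Bi l (grow r i e).
Proof. cbn [grow]. rewrite (proj2 (Nat.ltb_ge _ _)) by lia. do 2 f_equal. lia. Qed.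

Lemma grow_Tr_l l m r i e : (i < nleaves l)%nat -> grow (Tr l m r) i e = Tr (grow l i e) m r.
Proof. intros H; cbn [grow]. rewrite (proj2 (Nat.ltb_lt _ _) H). reflexivity. Qed.

Lemma grow_Tr_m l m r i e :
  (i < nleaves m)%nat -> grow (Tr l m r) (nleaves l + i) e = Tr l (grow m i e) r.
Proof.
  intros H; cbn [grow]. rewrite (proj2 (Nat.ltb_ge _ _)) by lia.
  replace (nleaves l + i - nleaves l)%nat with i by lia.
  rewrite (proj2 (Nat.ltb_lt _ _) H). reflexivity.
Qed.

Lemma grow_Tr_r l m r i e : grow (Tr l m r) (nleaves l + nleaves m + i) e = Tr l m (grow r i e).
Proof.
  cbn [grow]. rewrite !(proj2 (Nat.ltb_ge _ _)) by lia. do 2 f_equal. lia.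
Qed.

Definition nthc (l : list bool) : nat -> bool := fun j => nth j l false.

Definition anc_type (t : asg_tree) (c : nat -> bool) : bool := c (anc_leaf t c).

Lemma anc_leaf_lt t c : (anc_leaf t c < nleaves t)%nat.
Proof.
  revert c; induction t as [|b t IH|l IHl r IHr|l IHl m IHm r IHr]; intros c; cbn.
  - lia.
  - apply IH.
  - destruct (negb _); [specialize (IHr (shiftc c (nleaves l))) | specialize (IHl c)]; lia.
  - destruct (_ && _);
      [specialize (IHr (shiftc c (nleaves l + nleaves m))) | specialize (IHl c)]; lia.
Qed.

Lemma vtype_anc_leaf_ext t c1 c2 : (forall j, (j < nleaves t)%nat -> c1 j = c2 j) ->
  vtype t c1 = vtype t c2 /\ anc_leaf t c1 = anc_leaf t c2.
Proof.
  revert c1 c2; induction t as [|b t IH|l IHl r IHr|l IHl m IHm r IHr]; intros c1 c2 H; cbn in *.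
  - rewrite H; auto; lia.
  - split; [reflexivity | apply (IH c1 c2 H)].
  - destruct (IHl c1 c2) as [-> ->]; [intros; apply H; lia|].
    destruct (IHr (shiftc c1 (nleaves l)) (shiftc c2 (nleaves l))) as [-> ->];
      [intros; unfold shiftc; apply H; lia|].
    auto.
  - destruct (IHl c1 c2) as [-> ->]; [intros; apply H; lia|].
    destruct (IHm (shiftc c1 (nleaves l)) (shiftc c2 (nleaves l))) as [-> _];
      [intros; unfold shiftc; apply H; lia|].
    destruct (IHr (shiftc c1 (nleaves l + nleaves m)) (shiftc c2 (nleaves l + nleaves m)))
      as [-> ->];
      [intros; unfold shiftc; apply H; lia|].
    auto.
Qed.

Lemma vtype_ext t c1 c2 : (forall j, (j < nleaves t)%nat -> c1 j = c2 j) -> vtype t c1 = vtype t c2.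
Proof. intros H; apply (vtype_anc_leaf_ext t c1 c2 H). Qed.

Lemma anc_type_ext t c1 c2 : (forall j, (j < nleaves t)%nat -> c1 j = c2 j) ->
  anc_type t c1 = anc_type t c2.
Proof.
  intros H. unfold anc_type. rewrite (proj2 (vtype_anc_leaf_ext t c1 c2 H)).
  apply H, anc_leaf_lt.
Qed.

Lemma anc_type_Bi l r c :
  anc_type (Bi l r) c =
  if vtype r (shiftc c (nleaves l)) then anc_type l c else anc_type r (shiftc c (nleaves l)).
Proof.
  unfold anc_type; cbn. destruct (vtype r _); cbn; [reflexivity|].
  unfold shiftc; f_equal; lia.
Qed.

Lemma anc_type_Tr l m r c :
  anc_type (Tr l m r) c =
  if vtype m (shiftc c (nleaves l)) || vtype r (shiftc c (nleaves l + nleaves m))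
  then anc_type l c else anc_type r (shiftc c (nleaves l + nleaves m)).
Proof.
  unfold anc_type; cbn. destruct (vtype m _), (vtype r _); cbn; try reflexivity.
  unfold shiftc; f_equal; lia.
Qed.

Section Prefix.
Variables (t : asg_tree) (l1 l2 : list bool).
Hypothesis hlen : (nleaves t <= length l1)%nat.

Let nthc_app_prefix j : (j < nleaves t)%nat -> nthc (l1 ++ l2) j = nthc l1 j.
Proof. intros; apply app_nth1; lia. Qed.

Lemma vtype_app_prefix : vtype t (nthc (l1 ++ l2)) = vtype t (nthc l1).
Proof. apply vtype_ext, nthc_app_prefix. Qed.

Lemma anc_type_app_prefix : anc_type t (nthc (l1 ++ l2)) = anc_type t (nthc l1).
Proof. apply anc_type_ext, nthc_app_prefix. Qed.

End Prefix.

Section Suffix.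
Variables (t : asg_tree) (l1 l2 : list bool).

Let shiftc_nthc_app j : shiftc (nthc (l1 ++ l2)) (length l1) j = nthc l2 j.
Proof. unfold shiftc, nthc. rewrite Nat.add_comm. apply app_nth2_plus. Qed.

Lemma vtype_app_suffix : vtype t (shiftc (nthc (l1 ++ l2)) (length l1)) = vtype t (nthc l2).
Proof. apply vtype_ext; intros; apply shiftc_nthc_app. Qed.

Lemma anc_type_app_suffix :
  anc_type t (shiftc (nthc (l1 ++ l2)) (length l1)) = anc_type t (nthc l2).
Proof. apply anc_type_ext; intros; apply shiftc_nthc_app. Qed.

End Suffix.

Lemma all_cfgs_length n l : In l (all_cfgs n) -> length l = n.
Proof.
  revert l; induction n as [|n IH]; cbn; intros l H.
  - destruct H as [<-|[]]; reflexivity.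
  - apply in_app_or in H.
    destruct H as [H|H]; apply in_map_iff in H; destruct H as [l' [<- H]]; cbn; rewrite IH; auto.
Qed.

Lemma cfg_weight_cons y0 b l :
  cfg_weight y0 (b :: l) = (if b then y0 else 1 - y0) * cfg_weight y0 l.
Proof. reflexivity. Qed.

Lemma sumR_cfgs_app y0 n1 n2 (H : list bool -> R) :
  sumR (fun l => cfg_weight y0 l * H l) (all_cfgs (n1 + n2)) =
  sumR (fun l1 => cfg_weight y0 l1 *
          sumR (fun l2 => cfg_weight y0 l2 * H (l1 ++ l2)) (all_cfgs n2)) (all_cfgs n1).
Proof.
  revert H; induction n1 as [|n1 IH]; intros H; cbn [all_cfgs Nat.add].
  - cbn. ring.
  - assert (Hb : forall b,
      sumR (fun l => cfg_weight y0 (b :: l) * H (b :: l)) (all_cfgs (n1 + n2)) =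
      sumR (fun l1 => cfg_weight y0 (b :: l1) *
        sumR (fun l2 => cfg_weight y0 l2 * H (b :: l1 ++ l2)) (all_cfgs n2)) (all_cfgs n1)).
    { intros b.
      transitivity ((if b then y0 else 1 - y0) *
                    sumR (fun l => cfg_weight y0 l * H (b :: l)) (all_cfgs (n1 + n2))).
      - rewrite <- sumR_scal; apply sumR_ext; intros; rewrite cfg_weight_cons; ring.
      - rewrite IH, <- sumR_scal; apply sumR_ext; intros; rewrite cfg_weight_cons; ring. }
    rewrite !sumR_app, !sumR_map, !Hb. reflexivity.
Qed.

Definition cfg_expect (y0 : R) (t : asg_tree) (F : bool -> bool -> R) : R :=
  sumR (fun l => cfg_weight y0 l * F (vtype t (nthc l)) (anc_type t (nthc l)))
       (all_cfgs (nleaves t)).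

Lemma anc_type1_prob_expect t y0 :
  anc_type1_prob t y0 = cfg_expect y0 t (fun _ a => if a then 1 else 0).
Proof. reflexivity. Qed.

Lemma cfg_expect_ext y0 t F G :
  (forall v a, F v a = G v a) -> cfg_expect y0 t F = cfg_expect y0 t G.
Proof. intros H; apply sumR_ext; intros l; rewrite H; reflexivity. Qed.

Lemma cfg_expect_Mk y0 b t F : cfg_expect y0 (Mk b t) F = cfg_expect y0 t (fun _ a => F b a).
Proof. reflexivity. Qed.

Lemma cfg_expect_Bi y0 l r F :
  cfg_expect y0 (Bi l r) F =
  cfg_expect y0 l (fun v1 a1 => cfg_expect y0 r (fun v2 a2 =>
    F (v1 && v2) (if v2 then a1 else a2))).
Proof.
  unfold cfg_expect at 1; cbn [nleaves]; rewrite sumR_cfgs_app.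
  apply sumR_ext_in; intros l1 H1; apply all_cfgs_length in H1. f_equal.
  apply sumR_ext; intros l2. f_equal.
  cbn [vtype]; rewrite anc_type_Bi, <- H1, vtype_app_suffix, anc_type_app_suffix.
  rewrite vtype_app_prefix, anc_type_app_prefix by lia. reflexivity.
Qed.

Lemma cfg_expect_Tr y0 l m r F :
  cfg_expect y0 (Tr l m r) F =
  cfg_expect y0 l (fun v1 a1 => cfg_expect y0 m (fun v2 _ => cfg_expect y0 r (fun v3 a3 =>
    F (v1 && (v2 || v3)) (if v2 || v3 then a1 else a3)))).
Proof.
  unfold cfg_expect at 1; cbn [nleaves]; rewrite !sumR_cfgs_app.
  apply sumR_ext_in; intros l1 H1; apply all_cfgs_length in H1. f_equal.
  apply sumR_ext_in; intros l2 H2; apply all_cfgs_length in H2. f_equal.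
  apply sumR_ext; intros l3. f_equal.
  cbn [vtype]; rewrite anc_type_Tr.
  replace (nleaves l + nleaves m)%nat with (length (l1 ++ l2)) by (rewrite length_app; lia).
  rewrite vtype_app_suffix, anc_type_app_suffix, <- app_assoc.
  rewrite <- H1, vtype_app_suffix, vtype_app_prefix by lia.
  rewrite vtype_app_prefix, anc_type_app_prefix by lia.
  destruct (vtype l _), (vtype m _), (vtype r _); reflexivity.
Qed.

(** * Laws of the root type and the ancestral type *)

(* The joint law of (V, A), stored as P(A = 1), P(A = 1, V = 0) and P(V = 1). *)
Record law := Law { p_anc : R; p_anc_root0 : R; p_root : R }.

Definition law_Mk (b : bool) (X : law) : law :=
  if b then Law (p_anc X) 0 1 else Law (p_anc X) (p_anc X) 0.

Definition law_Bi (X Y : law) : law :=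
  Law (p_anc X * p_root Y + p_anc_root0 Y)
      (p_anc_root0 Y + p_anc_root0 X * p_root Y)
      (p_root X * p_root Y).

Definition law_Tr (X M Y : law) : law :=
  let q := 1 - (1 - p_root M) * (1 - p_root Y) in
  Law (q * p_anc X + (1 - p_root M) * p_anc_root0 Y)
      ((1 - p_root M) * p_anc_root0 Y + q * p_anc_root0 X)
      (q * p_root X).

Fixpoint tree_law (t : asg_tree) (L : law) : law :=
  match t with
  | Lf => L
  | Mk b c => law_Mk b (tree_law c L)
  | Bi l r => law_Bi (tree_law l L) (tree_law r L)
  | Tr l m r => law_Tr (tree_law l L) (tree_law m L) (tree_law r L)
  end.

Definition law_expect (D : law) (F : bool -> bool -> R) : R :=
  F true true * (p_anc D - p_anc_root0 D) + F true false * (p_root D - p_anc D + p_anc_root0 D)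
  + F false true * p_anc_root0 D + F false false * (1 - p_root D - p_anc_root0 D).

Lemma cfg_expect_tree_law y0 t F : cfg_expect y0 t F = law_expect (tree_law t (Law y0 0 y0)) F.
Proof.
  revert F; induction t as [|b t IH|l IHl r IHr|l IHl m IHm r IHr]; intros F.
  - unfold cfg_expect, law_expect; cbn. ring.
  - rewrite cfg_expect_Mk, IH. destruct b; unfold law_expect; cbn; ring.
  - rewrite cfg_expect_Bi. erewrite cfg_expect_ext by (intros; apply IHr).
    rewrite IHl. unfold law_expect; cbn. ring.
  - rewrite cfg_expect_Tr.
    erewrite cfg_expect_ext
      by (intros; erewrite cfg_expect_ext by (intros; apply IHr); apply IHm).
    rewrite IHl. unfold law_expect; cbn. ring.
Qed.

Lemma anc_type1_prob_tree_law t y0 : anc_type1_prob t y0 = p_anc (tree_law t (Law y0 0 y0)).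
Proof. rewrite anc_type1_prob_expect, cfg_expect_tree_law. unfold law_expect. ring. Qed.

Definition law_valid (D : law) : Prop :=
  0 <= p_anc D - p_anc_root0 D /\ 0 <= p_root D - p_anc D + p_anc_root0 D /\
  0 <= p_anc_root0 D /\ 0 <= 1 - p_root D - p_anc_root0 D.

Lemma tree_law_valid L t : law_valid L -> law_valid (tree_law t L).
Proof.
  intros HL; induction t as [|b t IH|l IHl r IHr|l IHl m IHm r IHr]; cbn [tree_law]; auto.
  - destruct b; unfold law_valid in *; cbn; lra.
  - destruct IHl as (a1 & b1 & c1 & d1), IHr as (a2 & b2 & c2 & d2).
    unfold law_valid; cbn. repeat split; nra.
  - destruct IHl as (a1 & b1 & c1 & d1), IHm as (a2 & b2 & c2 & d2), IHr as (a3 & b3 & c3 & d3).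
    unfold law_valid; cbn.
    remember (1 - p_root (tree_law m L)) as mM eqn:HmM.
    remember (1 - mM * (1 - p_root (tree_law r L))) as q eqn:Hq.
    assert (0 <= mM <= 1) by lra.
    assert (0 <= q) by (assert (0 <= 1 - p_root (tree_law r L) <= 1) by lra; nra).
    replace (1 - q * p_root (tree_law l L) - _)
      with (mM * (1 - p_root (tree_law r L) - p_anc_root0 (tree_law r L))
            + q * (1 - p_root (tree_law l L) - p_anc_root0 (tree_law l L))) by (subst; ring).
    repeat split; nra.
Qed.

(* The linear part of [h] is read off from its values at [law0] and at the unit vectors, so
   affinity is checked by [ring] and [lin h] needs no coefficients supplied by hand. *)
Definition law0 : law := Law 0 0 0.

Definition lin (h : law -> R) (V : law) : R :=
  (h (Law 1 0 0) - h law0) * p_anc V + (h (Law 0 1 0) - h law0) * p_anc_root0 V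
  + (h (Law 0 0 1) - h law0) * p_root V.

Definition affine (h : law -> R) : Prop := forall V, h V = h law0 + lin h V.

Ltac solve_affine :=
  unfold affine; intros; match goal with |- _ = _ + lin _ ?V => destruct V end;
  unfold lin; cbn; ring.

Definition is_derive_law (F : R -> law) (x : R) (V : law) : Prop :=
  is_derive (fun z => p_anc (F z)) x (p_anc V) /\
  is_derive (fun z => p_anc_root0 (F z)) x (p_anc_root0 V) /\
  is_derive (fun z => p_root (F z)) x (p_root V).

(** * Real analysis *)

Lemma is_derive_Rplus (f g : R -> R) x df dg :
  is_derive f x df -> is_derive g x dg -> is_derive (fun z => f z + g z) x (df + dg).
Proof. apply (is_derive_plus f g). Qed.

Lemma is_derive_Rminus (f g : R -> R) x df dg :
  is_derive f x df -> is_derive g x dg -> is_derive (fun z => f z - g z) x (df - dg).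
Proof. apply (is_derive_minus f g). Qed.

Lemma is_derive_Rmult (f g : R -> R) x df dg :
  is_derive f x df -> is_derive g x dg -> is_derive (fun z => f z * g z) x (df * g x + f x * dg).
Proof. intros; apply (is_derive_mult f g); auto. intros; apply Rmult_comm. Qed.

Lemma is_derive_exp_comp (f : R -> R) x df :
  is_derive f x df -> is_derive (fun z => exp (f z)) x (df * exp (f x)).
Proof. intros H. exact (is_derive_comp exp f x (exp (f x)) df (is_derive_exp (f x)) H). Qed.

Lemma is_derive_Ropp (f : R -> R) x df :
  is_derive f x df -> is_derive (fun z => - f z) x (- df).
Proof. apply (is_derive_opp f). Qed.

Lemma is_derive_Rconst (c x : R) : is_derive (fun _ => c) x 0.
Proof. apply (is_derive_const c). Qed.

Lemma is_derive_Rid (x : R) : is_derive (fun z => z) x 1.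
Proof. apply (is_derive_id x). Qed.

Ltac derive_step :=
  match goal with
  | |- is_derive (fun z => @?f z + @?g z) _ _ => apply (is_derive_Rplus f g)
  | |- is_derive (fun z => @?f z - @?g z) _ _ => apply (is_derive_Rminus f g)
  | |- is_derive (fun z => @?f z * @?g z) _ _ => apply (is_derive_Rmult f g)
  | |- is_derive (fun z => - @?f z) _ _ => apply (is_derive_Ropp f)
  | |- is_derive (fun z => exp (@?f z)) _ _ => apply (is_derive_exp_comp f)
  | |- is_derive (fun _ => ?c) _ _ => apply (is_derive_Rconst c)
  | |- is_derive (fun z => z) _ _ => apply is_derive_Rid
  | _ => eassumption
  end.

Lemma is_derive_eq (f : R -> R) (x d1 d2 : R) : is_derive f x d1 -> d1 = d2 -> is_derive f x d2.
Proof. intros H <-; exact H. Qed.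

Ltac solve_derive := eapply is_derive_eq; [repeat derive_step | ring].

Definition all_continuous (f : R -> R) : Prop := forall z, continuous f z.

Ltac continuity_step :=
  match goal with
  | |- continuous (fun z => @?f z + @?g z) _ => apply (continuous_plus f g)
  | |- continuous (fun z => @?f z - @?g z) _ => apply (continuous_minus f g)
  | |- continuous (fun z => @?f z * @?g z) _ => apply (continuous_mult f g)
  | |- continuous (fun z => - @?f z) _ => apply (continuous_opp f)
  | |- continuous (fun z => exp (@?f z)) _ => apply (continuous_exp_comp f)
  | |- continuous (fun _ => ?c) _ => apply (continuous_const c)
  | |- continuous (fun z => z) _ => apply continuous_id
  | H : all_continuous ?h |- continuous ?h _ => apply H
  | H : all_continuous ?h |- continuous (fun z => ?h (@?g z)) _ =>
      apply (continuous_comp g h); [| apply H]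
  | _ => eassumption
  end.

Ltac solve_continuous := repeat continuity_step.

Lemma ex_RInt_all_continuous f a b : all_continuous f -> ex_RInt f a b.
Proof. intros Hf. apply (ex_RInt_continuous (V := R_CompleteNormedModule)). intros; apply Hf. Qed.

Lemma is_derive_RInt_upper f a x : all_continuous f -> is_derive (fun b => RInt f a b) x (f x).
Proof.
  intros Hf. apply is_derive_RInt with (a := a).
  - apply filter_forall; intros b. apply RInt_correct, ex_RInt_all_continuous, Hf.
  - apply Hf.
Qed.

Lemma RInt_upper_continuous f a : all_continuous f -> all_continuous (fun b => RInt f a b).
Proof.
  intros Hf x. apply (ex_derive_continuous (fun b => RInt f a b)).
  eexists. apply is_derive_RInt_upper, Hf.
Qed.

Lemma RInt_Rpoint (f : R -> R) a : RInt f a a = 0.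
Proof. exact (RInt_point (V := R_CompleteNormedModule) a f). Qed.

Lemma eq_of_derive_zero (F : R -> R) r : 0 <= r -> all_continuous F ->
  (forall z, 0 < z -> is_derive F z 0) -> F r = F 0.
Proof.
  intros Hr Hc Hd.
  destruct (MVT_gen F 0 r (fun _ => 0)) as [c [_ Hc2]].
  - intros z Hz. rewrite Rmin_left, Rmax_right in Hz by lra. apply Hd. lra.
  - intros; apply continuity_pt_filterlim, Hc.
  - lra.
Qed.

Section LinearODE.
Variables (w A a b : R -> R) (r : R).
Hypotheses (hr : 0 <= r) (hw : all_continuous w) (hb : all_continuous b)
  (hA : forall z, is_derive A z (a z)) (hw' : forall z, 0 < z -> is_derive w z (a z * w z + b z)).

Lemma variation_of_constants :
  w r * exp (- A r) = w 0 * exp (- A 0) + RInt (fun z => exp (- A z) * b z) 0 r.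
Proof.
  assert (hAc : all_continuous A) by (intros z; apply (ex_derive_continuous A); eexists; apply hA).
  assert (hint : all_continuous (fun z => exp (- A z) * b z)) by (intros z; solve_continuous).
  set (K z := w z * exp (- A z) - RInt (fun z => exp (- A z) * b z) 0 z).
  enough (E : K r = K 0) by (unfold K in E; rewrite RInt_Rpoint in E; lra).
  apply eq_of_derive_zero; auto.
  - intros z. pose proof (RInt_upper_continuous _ 0 hint z). unfold K; solve_continuous.
  - intros z Hz. unfold K. eapply is_derive_eq.
    + apply (is_derive_Rminus (fun z => w z * exp (- A z))).
      * apply (is_derive_Rmult w (fun z => exp (- A z))); [apply hw', Hz|].
        apply (is_derive_exp_comp (fun z => - A z)), (is_derive_opp A), hA.
      * apply is_derive_RInt_upper, hint.
    + cbn. ring.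
Qed.

Lemma linear_ode_nonneg : 0 <= w 0 -> (forall z, 0 <= z <= r -> 0 <= b z) -> 0 <= w r.
Proof.
  intros Hw0 Hb. pose proof variation_of_constants as E.
  assert (0 <= RInt (fun z => exp (- A z) * b z) 0 r).
  { apply RInt_ge_0; auto.
    - apply ex_RInt_all_continuous. intros z; solve_continuous.
      apply (ex_derive_continuous A); eexists; apply hA.
    - intros z Hz. apply Rmult_le_pos; [apply Rlt_le, exp_pos | apply Hb; lra]. }
  pose proof (exp_pos (- A r)). pose proof (exp_pos (- A 0)).
  destruct (Rle_or_lt 0 (w r)); auto. nra.
Qed.

End LinearODE.

(* Convolution with the holding-time density, written exactly as in [jumpsum]. *)
Definition conv (L : R) (h : R -> R) (r : R) : R :=
  RInt (fun tau => exp (- L * tau) * h (r - tau)) 0 r.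

Lemma conv_ext L f g r : (forall z, f z = g z) -> conv L f r = conv L g r.
Proof. intros H. unfold conv. apply RInt_ext. intros; rewrite H; reflexivity. Qed.

Lemma conv_alt L h r : all_continuous h ->
  conv L h r = exp (- L * r) * RInt (fun z => exp (L * z) * h z) 0 r.
Proof.
  intros Hh. unfold conv.
  set (f z := exp (L * z) * h z).
  assert (Hf : all_continuous f) by (intros z; unfold f; solve_continuous).
  transitivity (RInt (fun tau => exp (- L * r) * (-1 * f (-1 * tau + r))) r 0).
  - rewrite <- (opp_RInt_swap (V := R_CompleteNormedModule))
      by (apply ex_RInt_all_continuous; intros z; solve_continuous).
    rewrite <- (RInt_opp (V := R_CompleteNormedModule))
      by (apply ex_RInt_all_continuous; intros z; solve_continuous).
    apply RInt_ext; intros tau _; unfold f, opp; cbn.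
    replace (-1 * tau + r) with (r - tau) by ring.
    replace (- L * tau) with (- L * r + L * (r - tau)) by ring. rewrite exp_plus. ring.
  - rewrite (RInt_scal (V := R_CompleteNormedModule))
      by (apply ex_RInt_all_continuous; intros z; solve_continuous).
    rewrite (RInt_comp_lin (V := R_CompleteNormedModule) f)
      by (apply ex_RInt_all_continuous, Hf).
    replace (-1 * r + r) with 0 by ring. replace (-1 * 0 + r) with r by ring. reflexivity.
Qed.

Lemma conv_continuous L h : all_continuous h -> all_continuous (conv L h).
Proof.
  intros Hh x.
  apply (continuous_ext (fun r => exp (- L * r) * RInt (fun z => exp (L * z) * h z) 0 r)).
  { intros r; symmetry; apply conv_alt, Hh. }
  assert (Hi : all_continuous (fun z => exp (L * z) * h z)) by (intros z; solve_continuous).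
  pose proof (RInt_upper_continuous _ 0 Hi x). solve_continuous.
Qed.

Section ConvLinear.
Variables (L r : R) (f g : R -> R).
Hypotheses (hf : all_continuous f) (hg : all_continuous g).

Let ex_RInt_conv h : all_continuous h -> ex_RInt (fun tau => exp (- L * tau) * h (r - tau)) 0 r.
Proof. intros Hh; apply ex_RInt_all_continuous; intros z; solve_continuous. Qed.

Lemma conv_plus : conv L (fun z => f z + g z) r = conv L f r + conv L g r.
Proof.
  unfold conv. rewrite <- (RInt_plus (V := R_CompleteNormedModule)) by now apply ex_RInt_conv.
  apply RInt_ext; intros; cbn; unfold plus; cbn; ring.
Qed.

Lemma conv_minus : conv L (fun z => f z - g z) r = conv L f r - conv L g r.
Proof.
  unfold conv. rewrite <- (RInt_minus (V := R_CompleteNormedModule)) by now apply ex_RInt_conv.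
  apply RInt_ext; intros; cbn; unfold minus, plus, opp; cbn; ring.
Qed.

Lemma conv_scal c : conv L (fun z => c * f z) r = c * conv L f r.
Proof.
  unfold conv. rewrite <- (RInt_scal (V := R_CompleteNormedModule)) by now apply ex_RInt_conv.
  apply RInt_ext; intros; cbn; unfold scal; cbn; unfold mult; cbn; ring.
Qed.

End ConvLinear.

Lemma conv_zero L r : conv L (fun _ => 0) r = 0.
Proof.
  unfold conv.
  rewrite (RInt_ext (V := R_CompleteNormedModule) _ (fun _ => 0)) by (intros; apply Rmult_0_r).
  rewrite RInt_const. apply Rmult_0_r.
Qed.

Lemma sumR_continuous {A} (f : A -> R -> R) l : (forall a, all_continuous (f a)) ->
  all_continuous (fun z => sumR (fun a => f a z) l).
Proof.
  intros Hf. induction l as [|a l IH]; intros z; [apply continuous_const|].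
  apply (continuous_plus (f a) (fun z => sumR (fun a => f a z) l)); [apply Hf | apply IH].
Qed.

Lemma conv_sumR {A} L r (f : A -> R -> R) l : (forall a, all_continuous (f a)) ->
  conv L (fun z => sumR (fun a => f a z) l) r = sumR (fun a => conv L (f a) r) l.
Proof.
  intros Hf. induction l as [|a l IH]; [apply conv_zero|].
  change (conv L (fun z => f a z + sumR (fun a => f a z) l) r =
          conv L (f a) r + sumR (fun a => conv L (f a) r) l).
  rewrite conv_plus, IH; auto. apply sumR_continuous, Hf.
Qed.

Lemma RInt_scaled_exp M k r :
  k <> 0 -> RInt (fun z => M * exp (k * z)) 0 r = M * (exp (k * r) - 1) / k.
Proof.
  intros Hk. apply is_RInt_unique.
  replace (M * (exp (k * r) - 1) / k) with (minus (M / k * exp (k * r)) (M / k * exp (k * 0)))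
    by (unfold minus, plus, opp; cbn; rewrite Rmult_0_r, exp_0; field; exact Hk).
  apply (is_RInt_derive (fun z => M / k * exp (k * z))).
  - intros z _. eapply is_derive_eq; [repeat derive_step | field; exact Hk].
  - intros z _. solve_continuous.
Qed.

Lemma conv_bound L c M h r : 0 <= r -> 0 < L + c -> all_continuous h ->
  (forall z, 0 <= z <= r -> Rabs (h z) <= M * exp (c * z)) ->
  Rabs (conv L h r) <= M * exp (c * r) / (L + c).
Proof.
  intros Hr Hlc Hh Hb.
  assert (HM : 0 <= M).
  { specialize (Hb 0 ltac:(lra)). rewrite Rmult_0_r, exp_0 in Hb.
    pose proof (Rabs_pos (h 0)). lra. }
  rewrite conv_alt, Rabs_mult, (Rabs_pos_eq (exp _)) by (auto; apply Rlt_le, exp_pos).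
  apply Rle_trans with (exp (- L * r) * (M * (exp ((L + c) * r) - 1) / (L + c))).
  - apply Rmult_le_compat_l; [apply Rlt_le, exp_pos|]. rewrite <- RInt_scaled_exp by lra.
    eapply Rle_trans; [apply abs_RInt_le; [lra | apply ex_RInt_all_continuous; intros z]|].
    { solve_continuous. }
    apply RInt_le; [lra | apply ex_RInt_all_continuous; intros z .. |].
    + apply continuous_Rabs_comp. solve_continuous.
    + solve_continuous.
    + intros z Hz. rewrite Rabs_mult, Rabs_pos_eq by apply Rlt_le, exp_pos.
      replace ((L + c) * z) with (L * z + c * z) by ring. rewrite exp_plus.
      specialize (Hb z ltac:(lra)). pose proof (exp_pos (L * z)). nra.
  - assert (E : exp (- L * r) * exp ((L + c) * r) = exp (c * r))
      by (rewrite <- exp_plus; f_equal; ring).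
    assert (0 <= M * exp (- L * r) / (L + c)).
    { apply Rmult_le_pos; [pose proof (exp_pos (- L * r)); nra|].
      apply Rlt_le, Rinv_0_lt_compat; lra. }
    apply Rle_trans with (M * exp (c * r) / (L + c) - M * exp (- L * r) / (L + c)); [|lra].
    right; rewrite <- E; field; lra.
Qed.

Lemma duhamel (w g : R -> R) L r : 0 <= r -> all_continuous w -> all_continuous g ->
  (forall z, 0 < z -> is_derive w z (g z - L * w z)) ->
  w r = exp (- L * r) * w 0 + conv L g r.
Proof.
  intros Hr Hw Hg Hd.
  assert (E : w r * exp (- - (L * r)) =
              w 0 * exp (- - (L * 0)) + RInt (fun z => exp (- - (L * z)) * g z) 0 r).
  { apply (variation_of_constants w (fun z => - (L * z)) (fun _ => - L) g r); auto; intros.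
    - solve_derive.
    - eapply is_derive_eq; [apply Hd; auto | ring]. }
  rewrite (RInt_ext (V := R_CompleteNormedModule) _ (fun z => exp (L * z) * g z)) in E
    by (intros; cbn; rewrite Ropp_involutive; reflexivity).
  rewrite Rmult_0_r, !Ropp_0, exp_0, Rmult_1_r in E.
  rewrite conv_alt, <- Rmult_plus_distr_l, <- E by exact Hg.
  assert (Einv : exp (- L * r) * exp (- - (L * r)) = 1)
    by (rewrite <- exp_plus, <- exp_0; f_equal; ring).
  transitivity (w r * (exp (- L * r) * exp (- - (L * r)))); [rewrite Einv | ]; ring.
Qed.

Lemma ratio_add_le a b c : 0 < a -> a <= b -> 0 <= c -> a / (a + c) <= b / (b + c).
Proof.
  intros Ha Hab Hc. apply Rmult_le_reg_r with ((a + c) * (b + c)); [nra|].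
  replace (a / (a + c) * ((a + c) * (b + c))) with (a * (b + c)) by (field; lra).
  replace (b / (b + c) * ((a + c) * (b + c))) with (b * (a + c)) by (field; lra).
  nra.
Qed.

Lemma is_lim_seq_of_error (v : nat -> R) l C : (forall N, Rabs (v N - l) <= C / (INR N + 1)) ->
  is_lim_seq v l.
Proof.
  intros H. apply is_lim_seq_spec. intros eps.
  destruct (nfloor_ex (Rabs C / eps)) as [N0 HN0].
  { apply Rmult_le_pos; [apply Rabs_pos | apply Rlt_le, Rinv_0_lt_compat, cond_pos]. }
  exists N0. intros N HN. apply le_INR in HN.
  pose proof (cond_pos eps). pose proof (pos_INR N).
  eapply Rle_lt_trans; [apply H|].
  apply Rle_lt_trans with (Rabs C / (INR N + 1)).
  - apply Rmult_le_compat_r; [apply Rlt_le, Rinv_0_lt_compat; lra | apply Rle_abs].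
  - assert (HC : Rabs C / eps * eps < (INR N + 1) * eps) by (apply Rmult_lt_compat_r; lra).
    replace (Rabs C / eps * eps) with (Rabs C) in HC by (field; lra).
    apply (Rmult_lt_reg_r (INR N + 1)); [lra|].
    replace (Rabs C / (INR N + 1) * (INR N + 1)) with (Rabs C) by (field; lra). lra.
Qed.

(** * The embedded ASG *)

Section ASG.
Variables s gam u nu0 nu1 : R.

Definition jump_sum (t : asg_tree) (G : asg_tree -> R) : R :=
  sumR (fun i => sumR (fun e => ev_rate s gam u nu0 nu1 e * G (grow t i e)) all_events)
       (seq 0 (nleaves t)).

Definition exit_rate (t : asg_tree) : R := lam s gam u nu0 nu1 * INR (nleaves t).

Definition generator (t : asg_tree) (G : asg_tree -> R) : R := jump_sum t G - exit_rate t * G t.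

Lemma jump_sum_ext t F G : (forall x, F x = G x) -> jump_sum t F = jump_sum t G.
Proof. intros H; apply sumR_ext; intros i; apply sumR_ext; intros e; rewrite H; reflexivity. Qed.

Lemma jump_sum_plus t F G :
  jump_sum t (fun x => F x + G x) = jump_sum t F + jump_sum t G.
Proof.
  unfold jump_sum; rewrite <- sumR_plus; apply sumR_ext; intros i.
  rewrite <- sumR_plus; apply sumR_ext; intros e; ring.
Qed.

Lemma jump_sum_scal t c G : jump_sum t (fun x => c * G x) = c * jump_sum t G.
Proof.
  unfold jump_sum; rewrite <- sumR_scal; apply sumR_ext; intros i.
  rewrite <- sumR_scal; apply sumR_ext; intros e; ring.
Qed.

Lemma jump_sum_minus t F G :
  jump_sum t (fun x => F x - G x) = jump_sum t F - jump_sum t G.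
Proof.
  replace (jump_sum t F - jump_sum t G) with (jump_sum t F + -1 * jump_sum t G) by ring.
  rewrite <- jump_sum_scal, <- jump_sum_plus. apply jump_sum_ext; intros; ring.
Qed.

Lemma jump_sum_const t c : jump_sum t (fun _ => c) = c * exit_rate t.
Proof.
  unfold jump_sum, exit_rate, lam.
  rewrite sumR_const, length_seq; unfold sumR, all_events, ev_rate; cbn. ring.
Qed.

Lemma jump_sum_Bi l r G :
  jump_sum (Bi l r) G = jump_sum l (fun x => G (Bi x r)) + jump_sum r (fun x => G (Bi l x)).
Proof.
  unfold jump_sum; cbn [nleaves]; rewrite sumR_seq_add. f_equal.
  - apply sumR_ext_in; intros i Hi; apply in_seq in Hi.
    apply sumR_ext; intros e. rewrite grow_Bi_l by lia. reflexivity.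
  - apply sumR_ext; intros i; apply sumR_ext; intros e. rewrite grow_Bi_r. reflexivity.
Qed.

Lemma jump_sum_Tr l m r G :
  jump_sum (Tr l m r) G = jump_sum l (fun x => G (Tr x m r)) + jump_sum m (fun x => G (Tr l x r))
                          + jump_sum r (fun x => G (Tr l m x)).
Proof.
  unfold jump_sum; cbn [nleaves]; rewrite !sumR_seq_add. f_equal; [f_equal|].
  - apply sumR_ext_in; intros i Hi; apply in_seq in Hi.
    apply sumR_ext; intros e. rewrite grow_Tr_l by lia. reflexivity.
  - apply sumR_ext_in; intros i Hi; apply in_seq in Hi.
    apply sumR_ext; intros e. rewrite grow_Tr_m by lia. reflexivity.
  - apply sumR_ext; intros i; apply sumR_ext; intros e. rewrite grow_Tr_r. reflexivity.
Qed.

Lemma generator_Mk b t G : generator (Mk b t) G = generator t (fun x => G (Mk b x)).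
Proof. reflexivity. Qed.

Lemma generator_Bi l r G :
  generator (Bi l r) G = generator l (fun x => G (Bi x r)) + generator r (fun x => G (Bi l x)).
Proof. unfold generator, exit_rate; rewrite jump_sum_Bi; cbn [nleaves]; rewrite plus_INR; ring. Qed.

Lemma generator_Tr l m r G :
  generator (Tr l m r) G = generator l (fun x => G (Tr x m r)) + generator m (fun x => G (Tr l x r))
                           + generator r (fun x => G (Tr l m x)).
Proof.
  unfold generator, exit_rate; rewrite jump_sum_Tr; cbn [nleaves]; rewrite !plus_INR; ring.
Qed.

Definition gen_law (t : asg_tree) (D : asg_tree -> law) : law :=
  Law (generator t (fun x => p_anc (D x))) (generator t (fun x => p_anc_root0 (D x)))
      (generator t (fun x => p_root (D x))).

Lemma generator_affine t D h : affine h -> generator t (fun x => h (D x)) = lin h (gen_law t D).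
Proof.
  intros Hh. unfold gen_law, generator.
  rewrite (jump_sum_ext t _ _ (fun x => Hh (D x))), (Hh (D t)).
  unfold lin; cbn [p_anc p_anc_root0 p_root].
  rewrite !jump_sum_plus, !jump_sum_scal, jump_sum_const. ring.
Qed.

Section TreeLaw.
Variable L : law.

Let D (t : asg_tree) : law := tree_law t L.

Lemma generator_tree_law_Mk (k : law -> R) b t :
  affine (fun X => k (law_Mk b X)) ->
  generator (Mk b t) (fun x => k (D x)) = lin (fun X => k (law_Mk b X)) (gen_law t D).
Proof. intros H. rewrite generator_Mk, <- generator_affine by exact H. reflexivity. Qed.

Lemma generator_tree_law_Bi (k : law -> R) l r :
  (forall Y, affine (fun X => k (law_Bi X Y))) -> (forall X, affine (fun Y => k (law_Bi X Y))) ->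
  generator (Bi l r) (fun x => k (D x)) =
  lin (fun X => k (law_Bi X (D r))) (gen_law l D) + lin (fun Y => k (law_Bi (D l) Y)) (gen_law r D).
Proof. intros H1 H2. rewrite generator_Bi, <- !generator_affine by auto. reflexivity. Qed.

Lemma generator_tree_law_Tr (k : law -> R) l m r :
  (forall M Y, affine (fun X => k (law_Tr X M Y))) ->
  (forall X Y, affine (fun M => k (law_Tr X M Y))) ->
  (forall X M, affine (fun Y => k (law_Tr X M Y))) ->
  generator (Tr l m r) (fun x => k (D x)) =
  lin (fun X => k (law_Tr X (D m) (D r))) (gen_law l D)
  + lin (fun M => k (law_Tr (D l) M (D r))) (gen_law m D)
  + lin (fun Y => k (law_Tr (D l) (D m) Y)) (gen_law r D).
Proof. intros H1 H2 H3. rewrite generator_Tr, <- !generator_affine by auto. reflexivity. Qed.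

End TreeLaw.

Section Backward.
Variables (leaf : R -> law) (x : R).

Definition backward (t : asg_tree) : Prop :=
  is_derive_law (fun z => tree_law t (leaf z)) x (gen_law t (fun t' => tree_law t' (leaf x))).

Tactic Notation "law_coords" :=
  cbn [gen_law law0 tree_law law_Mk law_Bi law_Tr p_anc p_anc_root0 p_root].
Tactic Notation "law_coords" "in" "*" :=
  cbn [gen_law law0 tree_law law_Mk law_Bi law_Tr p_anc p_anc_root0 p_root] in *.

Lemma backward_Mk b t : backward t -> backward (Mk b t).
Proof.
  intros (Xa & Xb & Xc); law_coords in *.
  split; [|split]; law_coords; rewrite generator_tree_law_Mk by (destruct b; solve_affine);
    unfold lin; destruct b; law_coords; solve_derive.
Qed.

Lemma backward_Bi l r : backward l -> backward r -> backward (Bi l r).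
Proof.
  intros (Xa & Xb & Xc) (Ya & Yb & Yc); law_coords in *.
  split; [|split]; law_coords; rewrite generator_tree_law_Bi by solve_affine;
    unfold lin; law_coords; solve_derive.
Qed.

Lemma backward_Tr l m r : backward l -> backward m -> backward r -> backward (Tr l m r).
Proof.
  intros (Xa & Xb & Xc) (Ma & Mb & Mc) (Ya & Yb & Yc); law_coords in *.
  split; [|split]; law_coords; rewrite generator_tree_law_Tr by solve_affine;
    unfold lin; law_coords; solve_derive.
Qed.

Lemma backward_all_trees : backward Lf -> forall t, backward t.
Proof.
  intros H0 t; induction t;
    [exact H0 | apply backward_Mk | apply backward_Bi | apply backward_Tr]; auto.
Qed.

End Backward.

Section Solution.
Variables (y0 : R) (Y : R -> R).
Hypotheses (hnu0 : nu0 = 0) (hnu1 : nu1 = 1) (hs : 0 < s) (hgam : 0 <= gam) (hu : 0 < u)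
  (hy0 : 0 <= y0 <= 1) (hY : all_continuous Y) (hY0 : Y 0 = y0)
  (hY' : forall z, 0 < z ->
     is_derive Y z (- Y z * (1 - Y z) * (s + gam * (1 - Y z)) + u * (1 - Y z))).

Definition hazard (z : R) : R := (1 - Y z) * (s + gam * (1 - Y z)).

Definition g_formula (z : R) : R := y0 * exp (- RInt hazard 0 z).

(* Not the law of a typed leaf: A = 1 with probability [g_formula z] but V = 1 with
   probability [Y z]. At [z = 0] both are [y0], the typing used in [g_asg]. *)
Definition leaf_law (z : R) : law := Law (g_formula z) 0 (Y z).

Definition anc_prob (t : asg_tree) (z : R) : R := p_anc (tree_law t (leaf_law z)).

Lemma hazard_continuous : all_continuous hazard.
Proof. intros z; unfold hazard; solve_continuous. Qed.

Lemma g_formula_derive z : is_derive g_formula z (- hazard z * g_formula z).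
Proof.
  pose proof (is_derive_RInt_upper hazard 0 z hazard_continuous).
  unfold g_formula; solve_derive.
Qed.

Lemma g_formula_continuous : all_continuous g_formula.
Proof. intros z; apply (ex_derive_continuous g_formula); eexists; apply g_formula_derive. Qed.

Lemma g_formula_0 : g_formula 0 = y0.
Proof. unfold g_formula. rewrite RInt_Rpoint, Ropp_0, exp_0. ring. Qed.

Lemma Y_le_1 r : 0 <= r -> Y r <= 1.
Proof.
  intros Hr.
  set (a z := Y z * (s + gam * (1 - Y z)) - u).
  assert (Ha : all_continuous a) by (intros z; unfold a; solve_continuous).
  enough (0 <= 1 - Y r) by lra.
  apply (linear_ode_nonneg (fun z => 1 - Y z) (fun z => RInt a 0 z) a (fun _ => 0) r); auto.
  - intros z; solve_continuous.
  - intros z; solve_continuous.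
  - intros z; apply is_derive_RInt_upper, Ha.
  - intros z Hz. pose proof (hY' z Hz). unfold a; solve_derive.
  - lra.
  - intros; lra.
Qed.

Lemma g_formula_le_Y r : 0 <= r -> g_formula r <= Y r.
Proof.
  intros Hr. enough (0 <= Y r - g_formula r) by lra.
  pose proof hazard_continuous as Hh. pose proof g_formula_continuous as Hg.
  apply (linear_ode_nonneg (fun z => Y z - g_formula z) (fun z => - RInt hazard 0 z)
           (fun z => - hazard z) (fun z => u * (1 - Y z)) r); auto.
  - intros z; solve_continuous.
  - intros z; solve_continuous.
  - intros z; pose proof (is_derive_RInt_upper hazard 0 z Hh); solve_derive.
  - intros z Hz. pose proof (hY' z Hz). pose proof (g_formula_derive z).
    unfold hazard in *; solve_derive.
  - rewrite g_formula_0, hY0. lra.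
  - intros z Hz. pose proof (Y_le_1 z (proj1 Hz)). nra.
Qed.

Lemma g_formula_nonneg z : 0 <= g_formula z.
Proof. unfold g_formula. pose proof (exp_pos (- RInt hazard 0 z)). nra. Qed.

Lemma anc_prob_bounds t r : 0 <= r -> 0 <= anc_prob t r <= 1.
Proof.
  intros Hr. unfold anc_prob.
  assert (HL : law_valid (leaf_law r)).
  { pose proof (g_formula_nonneg r). pose proof (g_formula_le_Y r Hr). pose proof (Y_le_1 r Hr).
    unfold law_valid, leaf_law; cbn. lra. }
  destruct (tree_law_valid _ t HL) as (H1 & H2 & H3 & H4). lra.
Qed.

Lemma backward_leaf x : 0 < x -> backward leaf_law x Lf.
Proof.
  intros Hx. pose proof (hY' x Hx). pose proof (g_formula_derive x).
  unfold backward, is_derive_law, gen_law, generator, jump_sum, exit_rate, lam.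
  rewrite hnu0, hnu1. unfold hazard in *; cbn.
  split; [|split]; solve_derive.
Qed.

Lemma tree_law_continuous t :
  all_continuous (fun z => p_anc (tree_law t (leaf_law z))) /\
  all_continuous (fun z => p_anc_root0 (tree_law t (leaf_law z))) /\
  all_continuous (fun z => p_root (tree_law t (leaf_law z))).
Proof.
  pose proof g_formula_continuous.
  induction t as [|b t IH|l IHl r IHr|l IHl m IHm r IHr]; cbn [tree_law].
  - repeat split; intros z; cbn; solve_continuous.
  - destruct IH as (? & ? & ?); destruct b; repeat split; intros z; cbn; solve_continuous.
  - destruct IHl as (? & ? & ?), IHr as (? & ? & ?); repeat split; intros z; cbn; solve_continuous.
  - destruct IHl as (? & ? & ?), IHm as (? & ? & ?), IHr as (? & ? & ?);
      repeat split; intros z; cbn; solve_continuous.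
Qed.

Lemma anc_prob_continuous t : all_continuous (anc_prob t).
Proof. apply tree_law_continuous. Qed.

Lemma anc_prob_derive t x :
  0 < x -> is_derive (anc_prob t) x (generator t (fun t' => anc_prob t' x)).
Proof. intros Hx. exact (proj1 (backward_all_trees leaf_law x (backward_leaf x Hx) t)). Qed.

Lemma ev_rate_nonneg e : 0 <= ev_rate s gam u nu0 nu1 e.
Proof. destruct e; cbn; rewrite ?hnu0, ?hnu1; nra. Qed.

Lemma exit_rate_eq t : exit_rate t = (s + gam + u) * INR (nleaves t).
Proof. unfold exit_rate, lam. rewrite hnu0, hnu1. ring. Qed.

Lemma jump_sum_continuous t (H : asg_tree -> R -> R) : (forall t', all_continuous (H t')) ->
  all_continuous (fun z => jump_sum t (fun t' => H t' z)).
Proof.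
  intros HH. apply sumR_continuous; intros i. apply sumR_continuous; intros e z.
  apply (continuous_mult (fun _ => ev_rate s gam u nu0 nu1 e)); [apply continuous_const | apply HH].
Qed.

Lemma conv_jump_sum L t (H : asg_tree -> R -> R) r : (forall t', all_continuous (H t')) ->
  conv L (fun z => jump_sum t (fun t' => H t' z)) r = jump_sum t (fun t' => conv L (H t') r).
Proof.
  intros HH.
  assert (Hc : forall i e, all_continuous (fun z => ev_rate s gam u nu0 nu1 e * H (grow t i e) z)).
  { intros i e z. apply (continuous_mult (fun _ => ev_rate s gam u nu0 nu1 e));
      [apply continuous_const | apply HH]. }
  unfold jump_sum. rewrite conv_sumR by (intros i; apply sumR_continuous, Hc).
  apply sumR_ext; intros i. rewrite conv_sumR by apply Hc.
  apply sumR_ext; intros e. apply conv_scal, HH.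
Qed.

Lemma Rabs_jump_sum_le t G B : (forall i e, Rabs (G (grow t i e)) <= B) ->
  Rabs (jump_sum t G) <= B * exit_rate t.
Proof.
  intros HB. rewrite <- jump_sum_const. unfold jump_sum.
  eapply Rle_trans; [apply Rabs_sumR|]. apply sumR_le; intros i _.
  eapply Rle_trans; [apply Rabs_sumR|]. apply sumR_le; intros e _.
  rewrite Rabs_mult, (Rabs_pos_eq _ (ev_rate_nonneg e)).
  apply Rmult_le_compat_l; [apply ev_rate_nonneg | apply HB].
Qed.

Lemma anc_prob_duhamel t r : 0 <= r ->
  anc_prob t r = exp (- exit_rate t * r) * anc_prob t 0
                 + jump_sum t (fun t' => conv (exit_rate t) (anc_prob t') r).
Proof.
  intros Hr. rewrite <- conv_jump_sum by apply anc_prob_continuous.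
  apply duhamel; auto using anc_prob_continuous.
  - apply jump_sum_continuous, anc_prob_continuous.
  - apply anc_prob_derive.
Qed.

Definition jump_term (k : nat) (t : asg_tree) (r : R) : R := jumpsum s gam u nu0 nu1 y0 k t r.

Lemma jump_term_0 t r : jump_term 0 t r = exp (- exit_rate t * r) * anc_prob t 0.
Proof.
  unfold jump_term, anc_prob, leaf_law; cbn [jumpsum].
  rewrite g_formula_0, hY0, anc_type1_prob_tree_law. reflexivity.
Qed.

Lemma jump_term_S k t r :
  jump_term (S k) t r = jump_sum t (fun t' => conv (exit_rate t) (jump_term k t') r).
Proof. reflexivity. Qed.

Lemma jump_term_continuous k t : all_continuous (jump_term k t).
Proof.
  revert t; induction k as [|k IH]; intros t z.
  - apply (continuous_ext (fun r => exp (- exit_rate t * r) * anc_prob t 0));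
      [intros; symmetry; apply jump_term_0 | solve_continuous].
  - apply (continuous_ext (fun r => jump_sum t (fun t' => conv (exit_rate t) (jump_term k t') r)));
      [reflexivity|].
    apply jump_sum_continuous. intros t'. apply conv_continuous, IH.
Qed.

Definition series_tail (N : nat) (t : asg_tree) (r : R) : R :=
  anc_prob t r - sum_n (fun k => jump_term k t r) N.

Lemma series_tail_0_eq t z : series_tail 0 t z = anc_prob t z - jump_term 0 t z.
Proof. unfold series_tail. rewrite sum_O. reflexivity. Qed.

Lemma series_tail_S_eq N t z : series_tail (S N) t z = series_tail N t z - jump_term (S N) t z.
Proof. unfold series_tail. rewrite sum_Sn. unfold plus; cbn. ring. Qed.

Lemma series_tail_continuous N t : all_continuous (series_tail N t).
Proof.
  pose proof (anc_prob_continuous t). pose proof (jump_term_continuous 0 t).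
  induction N as [|N IH]; intros z.
  - apply (continuous_ext (fun z => anc_prob t z - jump_term 0 t z));
      [intros; symmetry; apply series_tail_0_eq | solve_continuous].
  - pose proof (jump_term_continuous (S N) t).
    apply (continuous_ext (fun z => series_tail N t z - jump_term (S N) t z));
      [intros; symmetry; apply series_tail_S_eq | solve_continuous].
Qed.

Lemma series_tail_0 t r : 0 <= r ->
  series_tail 0 t r = jump_sum t (fun t' => conv (exit_rate t) (anc_prob t') r).
Proof. intros Hr. rewrite series_tail_0_eq, jump_term_0, (anc_prob_duhamel t r Hr). ring. Qed.

Lemma series_tail_S N t r : 0 <= r ->
  series_tail (S N) t r = jump_sum t (fun t' => conv (exit_rate t) (series_tail N t') r).
Proof.
  intros Hr. revert t; induction N as [|N IH]; intros t;
    rewrite series_tail_S_eq, jump_term_S, ?series_tail_0, ?IH, <- jump_sum_minus by exact Hr;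
    apply jump_sum_ext; intros t';
    rewrite <- conv_minus
      by auto using anc_prob_continuous, jump_term_continuous, series_tail_continuous;
    apply conv_ext; intros z; rewrite ?series_tail_0_eq, ?series_tail_S_eq; reflexivity.
Qed.

Definition growth_bound (K : R) (t : asg_tree) (r : R) : R :=
  INR (nleaves t) / (INR (nleaves t) + K) * exp (2 * (s + gam + u) * r).

Lemma jump_conv_bound t (f : asg_tree -> R -> R) K r : 0 <= r -> 0 <= K ->
  (forall t', all_continuous (f t')) ->
  (forall t' z, 0 <= z <= r -> Rabs (f t' z) <= growth_bound K t' z) ->
  Rabs (jump_sum t (fun t' => conv (exit_rate t) (f t') r)) <= growth_bound (2 + K) t r.
Proof.
  intros Hr HK Hc Hb. unfold growth_bound in *. rewrite exit_rate_eq.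
  set (lam := s + gam + u) in *. assert (Hlam : 0 < lam) by (unfold lam; lra).
  set (n := INR (nleaves t)).
  assert (Hn : 1 <= n) by (apply (le_INR 1), nleaves_pos).
  set (M := (n + 2) / (n + 2 + K)).
  eapply Rle_trans.
  - apply (Rabs_jump_sum_le _ _ (M * exp (2 * lam * r) / (lam * n + 2 * lam))).
    intros i e. apply conv_bound; auto; [nra|].
    intros z Hz. eapply Rle_trans; [apply Hb, Hz|].
    apply Rmult_le_compat_r; [apply Rlt_le, exp_pos|].
    pose proof (nleaves_grow t i e) as Hg. apply le_INR in Hg. rewrite plus_INR in Hg.
    pose proof (nleaves_pos (grow t i e)) as Hg1. apply le_INR in Hg1. cbn in Hg, Hg1. fold n in Hg.
    apply ratio_add_le; lra.
  - right. rewrite exit_rate_eq. unfold M. fold lam n. field. nra.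
Qed.

Lemma series_tail_bound N t r : 0 <= r ->
  Rabs (series_tail N t r) <= growth_bound (2 * INR (S N)) t r.
Proof.
  revert t r; induction N as [|N IH]; intros t r Hr.
  - rewrite series_tail_0 by exact Hr. replace (2 * INR 1) with (2 + 0) by (cbn; ring).
    apply jump_conv_bound; auto using anc_prob_continuous; [lra|].
    intros t' z Hz. unfold growth_bound.
    pose proof (nleaves_pos t') as H1; apply le_INR in H1; cbn in H1.
    replace (INR (nleaves t') / (INR (nleaves t') + 0)) with 1 by (field; lra). rewrite Rmult_1_l.
    destruct (anc_prob_bounds t' z (proj1 Hz)).
    pose proof (exp_ineq1_le (2 * (s + gam + u) * z)).
    assert (0 <= 2 * (s + gam + u) * z) by nra.
    rewrite Rabs_pos_eq; lra.
  - rewrite series_tail_S by exact Hr.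
    replace (2 * INR (S (S N))) with (2 + 2 * INR (S N)) by (rewrite (S_INR (S N)); ring).
    apply jump_conv_bound; auto using series_tail_continuous.
    + pose proof (pos_INR (S N)). lra.
    + intros t' z Hz. apply IH, Hz.
Qed.

Lemma jump_term_series r : 0 <= r -> is_series (fun k => jump_term k Lf r) (g_formula r).
Proof.
  intros Hr. change (is_lim_seq (sum_n (fun k => jump_term k Lf r)) (anc_prob Lf r)).
  apply (is_lim_seq_of_error _ _ (exp (2 * (s + gam + u) * r))). intros N.
  rewrite <- Rabs_Ropp.
  replace (- (sum_n (fun k => jump_term k Lf r) N - anc_prob Lf r)) with (series_tail N Lf r)
    by (unfold series_tail; ring).
  eapply Rle_trans; [apply series_tail_bound, Hr|]. unfold growth_bound; cbn [nleaves].
  change (INR 1) with 1. rewrite (S_INR N).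
  pose proof (pos_INR N). pose proof (exp_pos (2 * (s + gam + u) * r)).
  assert (1 / (1 + 2 * (INR N + 1)) <= 1 / (INR N + 1))
    by (apply Rmult_le_compat_l; [lra | apply Rinv_le_contravar; lra]).
  apply Rle_trans with (1 / (INR N + 1) * exp (2 * (s + gam + u) * r));
    [apply Rmult_le_compat_r; lra | right; field; lra].
Qed.

End Solution.

End ASG.

Section Clamp.
Variables (y : R -> R) (y0 : R).

Lemma locally_clamp_eq x : 0 < x -> locally x (fun z => y z = y (Rmax 0 z)).
Proof.
  intros Hx. exists (mkposreal x Hx). intros z Hz. apply Rabs_def2 in Hz; cbn in Hz.
  rewrite Rmax_right by lra. reflexivity.
Qed.

Lemma is_derive_clamp x d : 0 < x -> is_derive y x d -> is_derive (fun z => y (Rmax 0 z)) x d.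
Proof. intros Hx. apply is_derive_ext_loc, locally_clamp_eq, Hx. Qed.

Lemma clamp_continuous : y 0 = y0 -> filterlim y (at_right 0) (locally y0) ->
  (forall x, 0 < x -> ex_derive y x) -> all_continuous (fun z => y (Rmax 0 z)).
Proof.
  intros H0 Hr Hd x. destruct (Rlt_or_le 0 x) as [Hx|Hx].
  - apply (continuous_ext_loc _ y); [apply locally_clamp_eq, Hx|].
    apply (ex_derive_continuous y), Hd, Hx.
  - apply filterlim_locally. intros eps.
    destruct (proj1 (filterlim_locally (F := at_right 0) y y0) Hr eps) as [d Hd'].
    exists d. intros z Hz. rewrite (Rmax_left 0 x Hx), H0.
    destruct (Rlt_or_le 0 z) as [Hz0|Hz0].
    + rewrite Rmax_right by lra. apply Hd'; auto.
      apply Rabs_def2 in Hz. cbn in Hz |- *. unfold AbsRing_ball, abs, minus, plus, opp; cbn.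
      rewrite Rabs_pos_eq by lra. lra.
    + rewrite Rmax_left by lra. rewrite H0. apply ball_center.
Qed.

End Clamp.

Theorem theorem2p38 (s gam u nu0 nu1 : R)
  (hnu0 : nu0 = 0) (hnu : nu0 + nu1 = 1)
  (hs : 0 < s) (hgam : 0 <= gam) (hu : 0 < u)
  (r y0 : R) (hr : 0 <= r) (hy0 : 0 <= y0 <= 1)
  (y : R -> R)
  (hy_init : y 0 = y0)
  (hy_cont0 : filterlim y (at_right 0) (locally y0))
  (hy_ode : forall xi, 0 < xi ->
     is_derive y xi (- y xi * (1 - y xi) * (s + gam * (1 - y xi)) + u * (1 - y xi))) :
  g_asg s gam u nu0 nu1 r y0 =
  y0 * exp (- RInt (fun xi => (1 - y xi) * (s + gam * (1 - y xi))) 0 r).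
Proof.
  assert (hnu1 : nu1 = 1) by lra.
  set (Y z := y (Rmax 0 z)).
  assert (hY0 : Y 0 = y0) by (unfold Y; rewrite Rmax_left by lra; exact hy_init).
  assert (hY : all_continuous Y)
    by (apply (clamp_continuous y y0 hy_init hy_cont0); intros x Hx; eexists; apply hy_ode, Hx).
  assert (hY' : forall z, 0 < z ->
    is_derive Y z (- Y z * (1 - Y z) * (s + gam * (1 - Y z)) + u * (1 - Y z))).
  { intros z Hz. unfold Y. rewrite (Rmax_right 0 z) by lra.
    apply is_derive_clamp, hy_ode; exact Hz. }
  transitivity (g_formula s gam y0 Y r).
  - apply is_series_unique,
      (jump_term_series s gam u nu0 nu1 y0 Y hnu0 hnu1 hs hgam hu hy0 hY hY0 hY' r hr).
  - unfold g_formula, hazard. do 3 f_equal. apply RInt_ext. intros z Hz.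
    rewrite Rmin_left, Rmax_right in Hz by lra. unfold Y. rewrite Rmax_right by lra. reflexivity.
Qed.
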